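(* Let $k\ge1$ and $d\ge 1$ be integers and $c$ a real number with $0< c\le k$. Let $S$ be a binomial random variable with parameters $k$ and $c/k$. If $d\le c\left(1-\frac{1}{k+1}\right)+1$, then \[ \mathbb{P}(S\ge d)\ \ge\ h_d(c) = 1-e^{-c}\sum_{i=0}^{d-1}\frac{c^i}{i!}. \]
   Context: $\mathbb{P}(S\ge d)$ is the probability that a buyer whose values for $k$ items are i.i.d. on $\{0,1\}$ with $\mathbb{P}(1)=c/k$ buys the bundle of all items at posted price $d$. *)

From Stdlib Require Import Reals Lra Lia List.
Open Scope R_scope.

Definition binom_pmf (k : nat) (p : R) (j : nat) : R :=
  C k j * p ^ j * (1 - p) ^ (k - j).

(* P(S >= d) for S ~ Binomial(k, p): sum of the pmf over j = d, ..., k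
   (empty sum, i.e. 0, if d > k). *)
Definition binom_tail (k : nat) (p : R) (d : nat) : R :=
  fold_right Rplus 0 (map (binom_pmf k p) (List.seq d (S k - d))).

(* h_d(c) = 1 - e^{-c} * sum_{i=0}^{d-1} c^i / i!  (= P(Poisson(c) >= d)). *)
Definition h (d : nat) (c : R) : R :=
  1 - exp (- c) * fold_right Rplus 0 (map (fun i => c ^ i / INR (Factorial.fact i)) (List.seq 0 d)).

From Stdlib Require Import Reals Lra Lia List.
From Coquelicot Require Import Coquelicot.
Open Scope R_scope.

(* Write T_n(λ) = P(Bin(n, λ/n) >= j + 1); with d = j + 1, n = k and λ = c the hypothesis
   on d reads j (n + 1) <= λ n.  For λ <= j + 1 this persists as n grows, and
   T_{n+1}(λ) <= T_n(λ): by Pascal's rule T_{n+1}(λ) = T_n(q) + q P(Bin(n, q) = j) with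
   q = λ/(n+1), while s ↦ P(Bin(n, s) >= j + 1) has derivative n P(Bin(n-1, s) = j), which
   on [q, λ/n] dominates P(Bin(n, q) = j) by unimodality and a comparison at each endpoint.
   Since T_n(λ) tends to the Poisson tail h_{j+1}(λ) with an explicit O(1/n) error,
   T_n(λ) >= h_{j+1}(λ).  For λ > j + 1, the derivative of T_n(λ) - h_{j+1}(λ) in λ is
   (λ/n)^j e^{-λ} Z(λ) with Z nonincreasing, so on [j + 1, n] the difference is smallest at
   an endpoint; it is nonnegative at j + 1 by the first case and at n because T_n(n) = 1. *)

Definition sum_from (f : nat -> R) (a n : nat) : R :=
  fold_right Rplus 0 (map f (seq a n)).

Lemma sum_from_S f a n : sum_from f a (S n) = f a + sum_from f (S a) n.
Proof. reflexivity. Qed.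

Lemma sum_from_add f a n1 n2 :
  sum_from f a (n1 + n2) = sum_from f a n1 + sum_from f (a + n1) n2.
Proof.
  unfold sum_from. rewrite seq_app, map_app, fold_right_app.
  induction (map f (seq a n1)) as [|x l IH]; simpl; [ring | rewrite IH; ring].
Qed.

Lemma sum_from_le f g a n :
  (forall i, (a <= i < a + n)%nat -> f i <= g i) -> sum_from f a n <= sum_from g a n.
Proof.
  revert a; induction n as [|n IH]; intros a Hfg; rewrite ?sum_from_S; [apply Rle_refl|].
  apply Rplus_le_compat; [apply Hfg; lia | apply IH; intros; apply Hfg; lia].
Qed.

Lemma sum_from_nonneg f a n : (forall i, 0 <= f i) -> 0 <= sum_from f a n.
Proof.
  intros Hf; revert a; induction n as [|n IH]; intros a; rewrite ?sum_from_S.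
  - apply Rle_refl.
  - specialize (IH (S a)); specialize (Hf a); lra.
Qed.

Lemma sum_from_scal c f a n :
  sum_from (fun i => c * f i) a n = c * sum_from f a n.
Proof.
  revert a; induction n as [|n IH]; intros a; rewrite ?sum_from_S; [cbn; ring|].
  rewrite IH; ring.
Qed.

Lemma sum_f_R0_sum_from f n : sum_f_R0 f n = sum_from f 0 (S n).
Proof.
  induction n as [|n IH]; [cbn; ring|].
  rewrite tech5, IH, <- (Nat.add_1_r (S n)), sum_from_add; cbn; ring.
Qed.

(* Bernoulli's inequality (B/A)^n >= 1 - n (1 - B/A), multiplied by A^(n+1). *)
Lemma bernoulli_hom A B n : 0 <= B <= A ->
  A ^ n * (A - INR n * (A - B)) <= A * B ^ n.
Proof.
  intros HBA. induction n as [|n IH]; [cbn; lra|].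
  rewrite S_INR. cbn [pow].
  assert (B ^ n <= A ^ n) by (apply pow_incr; lra).
  assert (A * (A ^ n * (A - INR n * (A - B))) <= A * (A * B ^ n))
    by (apply Rmult_le_compat_l; lra).
  assert (0 <= A * (A - B)) by nra.
  nra.
Qed.

(* (1 + 1/v)^v <= (1 + 1/(v+1))^(v+1) with denominators cleared: Bernoulli for
   (1 - 1/(v+1)^2)^(v+1). *)
Lemma one_plus_inv_pow_le_succ v : (1 <= v)%nat ->
  (INR v + 1) ^ (2 * v + 1) <= INR v ^ v * (INR v + 2) ^ (v + 1).
Proof.
  intros Hv. set (x := INR v).
  assert (Hx : 1 <= x) by (apply (le_INR 1); exact Hv).
  pose proof (bernoulli_hom ((x + 1) ^ 2) (x * (x + 2)) (S v)) as H.
  rewrite S_INR in H. fold x in H.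
  replace ((x + 1) ^ 2 - x * (x + 2)) with 1 in H by ring.
  replace ((x + 1) ^ 2 - (x + 1) * 1) with (x * (x + 1)) in H by ring.
  rewrite <- pow_mult, Rpow_mult_distr in H.
  replace (2 * S v)%nat with (S (2 * v + 1)) in H by lia.
  replace (v + 1)%nat with (S v) by lia. cbn [pow] in H |- *.
  assert (0 < x * (x + 1) * (x + 1)) by (apply Rmult_lt_0_compat; nra).
  apply (Rmult_le_reg_r (x * (x + 1) * (x + 1))); [assumption|].
  specialize (H ltac:(nra)).
  eapply Rle_trans; [|eapply Rle_trans; [exact H|]]; right; ring.
Qed.

Lemma one_plus_inv_pow_le v m : (1 <= v <= m)%nat ->
  (INR v + 1) ^ v * INR m ^ m <= (INR m + 1) ^ m * INR v ^ v.
Proof.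
  intros [Hv Hvm]. induction Hvm as [|m Hvm IH]; [apply Rle_refl|].
  pose proof (one_plus_inv_pow_le_succ m ltac:(lia)) as Hstep.
  rewrite S_INR. replace (S m) with (m + 1)%nat by lia.
  assert (Hm : 1 <= INR m) by (apply (le_INR 1); lia).
  set (M := INR m) in *. set (V := INR v) in *.
  assert (0 <= V) by (unfold V; apply pos_INR).
  assert (0 < M ^ m) by (apply pow_lt; lra).
  assert (0 <= V ^ v) by (apply pow_le; lra).
  replace (2 * m + 1)%nat with (m + m + 1)%nat in Hstep by lia.
  rewrite !pow_add, !pow_1 in Hstep |- *. rewrite pow_add, pow_1 in Hstep.
  apply (Rmult_le_reg_l (M ^ m)); [assumption|].
  replace (M + 1 + 1) with (M + 2) by ring.
  apply Rle_trans with (V ^ v * ((M + 1) ^ m * (M + 1) ^ m * (M + 1))).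
  - apply Rle_trans with ((V + 1) ^ v * M ^ m * ((M + 1) ^ m * (M + 1))); [right; ring|].
    apply Rle_trans with ((M + 1) ^ m * V ^ v * ((M + 1) ^ m * (M + 1))); [|right; ring].
    apply Rmult_le_compat_r; [|exact IH].
    apply Rmult_le_pos; [apply pow_le|]; lra.
  - apply Rle_trans with (V ^ v * (M ^ m * ((M + 2) ^ m * (M + 2)))); [|right; ring].
    apply Rmult_le_compat_l; assumption.
Qed.

(* With v = w + 1, u ↦ (u+1)^v / u^(v-1) increases on [v - 1, v]. *)
Lemma shift_pow_ratio_le w u : INR w <= u <= INR w + 1 ->
  (u + 1) ^ S w * (INR w + 1) ^ w <= (INR w + 2) ^ S w * u ^ w.
Proof.
  intros Hu. destruct w as [|w']; [cbn in *; lra|].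
  set (w := S w') in *. set (v := INR w + 1) in *.
  assert (Hv : v = INR w + 1) by reflexivity.
  assert (Hw : 1 <= INR w) by (apply (le_INR 1); unfold w; lia).
  set (A := v * (u + 1)). set (B := u * (v + 1)).
  assert (HAB : A - B = v - u) by (unfold A, B; ring).
  assert (HBA : 0 <= B <= A) by (split; [unfold B; nra | lra]).
  pose proof (bernoulli_hom A B (S w) HBA) as Hb.
  rewrite HAB in Hb. unfold A, B in Hb. rewrite !Rpow_mult_distr in Hb.
  assert (Hquad : u * (u + 1) <= v * (u + 1) - INR (S w) * (v - u)).
  { replace (INR (S w)) with v by (rewrite S_INR; lra).
    assert (0 <= (v - u) * (1 - (v - u))) by (apply Rmult_le_pos; lra).
    enough (v * (u + 1) - v * (v - u) - u * (u + 1) = (v - u) * (1 - (v - u))) by lra.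
    ring. }
  assert (0 <= v ^ S w * (u + 1) ^ S w) by (apply Rmult_le_pos; apply pow_le; lra).
  assert (Hchain : v ^ S w * (u + 1) ^ S w * (u * (u + 1))
                   <= v * (u + 1) * (u ^ S w * (v + 1) ^ S w)).
  { eapply Rle_trans; [|exact Hb].
    apply Rle_trans with (v ^ S w * (u + 1) ^ S w * (v * (u + 1) - INR (S w) * (v - u)));
      [apply Rmult_le_compat_l; assumption | right; cbn [pow]; ring]. }
  replace (INR w + 2) with (v + 1) by (unfold v; ring).
  apply (Rmult_le_reg_l (u * v * (u + 1))); [apply Rmult_lt_0_compat; [nra|lra]|].
  eapply Rle_trans; [|eapply Rle_trans; [exact Hchain|]]; right; cbn [pow]; ring.
Qed.

Lemma shift_pow_ratio_compound_le m w u : (S w <= m)%nat -> INR w <= u <= INR w + 1 ->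
  INR m ^ m * (u + 1) ^ S w <= INR (S w) * (INR m + 1) ^ m * u ^ w.
Proof.
  intros Hwm Hu.
  pose proof (shift_pow_ratio_le w u Hu) as Hshift.
  pose proof (one_plus_inv_pow_le (S w) m ltac:(lia)) as Hcomp.
  rewrite S_INR in Hcomp |- *.
  replace (INR w + 1 + 1) with (INR w + 2) in Hcomp by ring.
  assert (0 <= INR w) by apply pos_INR.
  assert (0 <= INR m ^ m) by (apply pow_le, pos_INR).
  assert (0 <= u ^ w) by (apply pow_le; lra).
  assert (0 < (INR w + 1) ^ w) by (apply pow_lt; lra).
  apply (Rmult_le_reg_r ((INR w + 1) ^ w)); [assumption|].
  apply Rle_trans with (INR m ^ m * ((INR w + 2) ^ S w * u ^ w)).
  - rewrite Rmult_assoc. apply Rmult_le_compat_l; assumption.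
  - apply Rle_trans with ((INR w + 2) ^ S w * INR m ^ m * u ^ w); [right; ring|].
    apply Rle_trans with ((INR m + 1) ^ m * (INR w + 1) ^ S w * u ^ w);
      [|right; cbn [pow]; ring].
    apply Rmult_le_compat_r; assumption.
Qed.

Lemma one_sub_pow_le_exp y k : y <= 1 -> (1 - y) ^ k <= exp (- (y * INR k)).
Proof.
  intros Hy. induction k as [|k IH]; [cbn; rewrite Rmult_0_r, Ropp_0, exp_0; lra|].
  rewrite S_INR. replace (- (y * (INR k + 1))) with (- y + - (y * INR k)) by ring.
  rewrite exp_plus. cbn [pow].
  apply Rmult_le_compat; [lra | apply pow_le; lra | |exact IH].
  pose proof (exp_ineq1_le (- y)). lra.
Qed.

Lemma exp_le_one_add_twice z : 0 <= z <= 1 / 2 -> exp z <= 1 + 2 * z.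
Proof.
  intros Hz.
  pose proof (exp_ineq1_le (- z)) as Hneg. rewrite exp_Ropp in Hneg.
  pose proof (exp_pos z) as Hpos.
  assert (Hinv : (1 - z) * exp z <= 1).
  { apply Rmult_le_reg_r with (/ exp z); [apply Rinv_0_lt_compat, Hpos|].
    rewrite Rmult_assoc, Rinv_r, Rmult_1_r, Rmult_1_l by lra. lra. }
  nra.
Qed.

Lemma le_of_eventually_ge_sub_div (a b A B : R) (N : nat) :
  (forall m, (N <= m)%nat -> B <= INR m -> a - A / INR m <= b) -> a <= b.
Proof.
  intros Hev. destruct (Rle_lt_dec a b) as [|Hlt]; [assumption|]. exfalso.
  destruct (INR_unbounded (INR N + Rabs B + Rabs (A / (a - b)) + 1)) as [m Hm].
  pose proof (Rle_abs B). pose proof (Rle_abs (A / (a - b))).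
  pose proof (Rabs_pos B). pose proof (Rabs_pos (A / (a - b))). pose proof (pos_INR N).
  assert (Hm0 : 0 < INR m) by lra.
  assert (HNm : (N <= m)%nat) by (apply Nat.lt_le_incl, INR_lt; lra).
  specialize (Hev m HNm ltac:(lra)).
  assert (A < (a - b) * INR m).
  { replace A with ((a - b) * (A / (a - b))) by (field; lra).
    apply Rmult_lt_compat_l; lra. }
  assert (A / INR m < a - b).
  { apply Rmult_lt_reg_r with (INR m); [exact Hm0|].
    unfold Rdiv. rewrite Rmult_assoc, Rinv_l, Rmult_1_r by lra. lra. }
  lra.
Qed.

Lemma MVT_lower_bound (f df : R -> R) a b K : a <= b ->
  (forall x, a <= x <= b -> is_derive f x (df x)) ->
  (forall x, a <= x <= b -> K <= df x) -> K * (b - a) <= f b - f a.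
Proof.
  intros Hab Hd HK.
  destruct (MVT_gen f a b df) as [c [Hc ->]];
    rewrite ?Rmin_left, ?Rmax_right in * by lra.
  - intros x Hx. apply Hd. lra.
  - intros x Hx. apply continuity_pt_filterlim, (ex_derive_continuous f).
    exists (df x). apply Hd. lra.
  - apply Rmult_le_compat_r; [lra|]. apply HK. lra.
Qed.

Lemma nondecreasing_of_deriv_nonneg (f df : R -> R) a b : a <= b ->
  (forall x, a <= x <= b -> is_derive f x (df x)) ->
  (forall x, a <= x <= b -> 0 <= df x) -> f a <= f b.
Proof. intros Hab Hd Hpos. pose proof (MVT_lower_bound f df a b 0 Hab Hd Hpos). lra. Qed.

Lemma nonincreasing_of_deriv_nonpos (f df : R -> R) a b : a <= b ->
  (forall x, a <= x <= b -> is_derive f x (df x)) ->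
  (forall x, a <= x <= b -> df x <= 0) -> f b <= f a.
Proof.
  intros Hab Hd Hneg.
  enough (- f a <= - f b) by lra.
  apply (nondecreasing_of_deriv_nonneg (fun x => - f x) (fun x => - df x) a b Hab).
  - intros x Hx. apply (is_derive_opp f), Hd, Hx.
  - intros x Hx. specialize (Hneg x Hx). lra.
Qed.

Lemma ge_min_of_deriv_sign_change (f w L : R -> R) a b x : a <= x <= b ->
  (forall t, a <= t <= b -> is_derive f t (w t * L t)) ->
  (forall t, a <= t <= b -> 0 <= w t) ->
  (forall s t, a <= s -> s <= t -> t <= b -> L t <= L s) ->
  Rmin (f a) (f b) <= f x.
Proof.
  intros Hx Hd Hw HL. destruct (Rle_lt_dec 0 (L x)) as [Hpos|Hneg].
  - apply Rle_trans with (f a); [apply Rmin_l|].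
    apply (nondecreasing_of_deriv_nonneg f (fun t => w t * L t)); [lra| |].
    + intros t Ht. apply Hd. lra.
    + intros t Ht. apply Rmult_le_pos; [apply Hw; lra|].
      apply Rle_trans with (L x); [exact Hpos | apply HL; lra].
  - apply Rle_trans with (f b); [apply Rmin_r|].
    apply (nonincreasing_of_deriv_nonpos f (fun t => w t * L t)); [lra| |].
    + intros t Ht. apply Hd. lra.
    + intros t Ht. apply Rmult_le_0_l; [apply Hw; lra|].
      apply Rle_trans with (L x); [apply HL; lra | lra].
Qed.

(* The derivative of t^j (1-t)^r is t^(j-1) (1-t)^(r-1) (j (1-t) - r t), whose last
   factor decreases; the match covers j = 0 and r = 0. *)
Lemma pow_beta_ge_min j r q s p : 0 <= q -> q <= s <= p -> p <= 1 ->
  Rmin (q ^ j * (1 - q) ^ r) (p ^ j * (1 - p) ^ r) <= s ^ j * (1 - s) ^ r.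
Proof.
  intros Hq Hs Hp. apply (ge_min_of_deriv_sign_change (fun t => t ^ j * (1 - t) ^ r)
    (fun t => t ^ pred j * (1 - t) ^ pred r)
    (fun t => match j, r with
              | O, _ => - INR r
              | _, O => INR j
              | _, _ => INR j * (1 - t) - INR r * t
              end)); [lra | | |].
  - intros t _. auto_derive; [exact I|].
    destruct j as [|j'], r as [|r']; cbn [pow Nat.pred INR]; rewrite ?S_INR;
      unfold Rminus; ring.
  - intros t Ht. apply Rmult_le_pos; apply pow_le; lra.
  - intros t1 t2 _ Ht _. destruct j as [|j'], r as [|r']; try lra.
    pose proof (pos_INR (S j')); pose proof (pos_INR (S r')). nra.
Qed.

(** * Binomial probabilities *)

Lemma nat_down_ind (P : nat -> Prop) (n : nat) :
  P n -> (forall a, (a < n)%nat -> P (S a) -> P a) -> forall a, (a <= n)%nat -> P a.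
Proof.
  intros Hn Hstep a Ha. remember (n - a)%nat as k eqn:Hk. revert a Ha Hk.
  induction k as [|k IH]; intros a Ha Hk.
  - replace a with n by lia. exact Hn.
  - apply Hstep; [lia | apply IH; lia].
Qed.

(* [n - k] is truncated in [Binomial.C n k], so it is positive for every [k]. *)
Lemma C_gt0 n k : 0 < Binomial.C n k.
Proof.
  unfold Binomial.C. apply Rdiv_lt_0_compat; [|apply Rmult_lt_0_compat];
    apply INR_fact_lt_0.
Qed.

Lemma C_absorb n k : (k <= n)%nat ->
  INR (S k) * Binomial.C (S n) (S k) = INR (S n) * Binomial.C n k.
Proof.
  intros H. unfold Binomial.C. replace (S n - S k)%nat with (n - k)%nat by lia.
  rewrite !fact_simpl, !mult_INR. field.
  repeat split; try apply INR_fact_neq_0. apply not_0_INR; lia.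
Qed.

Lemma C_absorb_sub n k : (k < n)%nat ->
  INR (n - k) * Binomial.C (S n) (S k) = INR (S n) * Binomial.C n (S k).
Proof.
  intros H. unfold Binomial.C.
  replace (S n - S k)%nat with (S (n - S k)) by lia.
  replace (n - k)%nat with (S (n - S k)) by lia.
  rewrite !fact_simpl, !mult_INR. field.
  repeat split; try apply INR_fact_neq_0; apply not_0_INR; lia.
Qed.

Lemma C_mul_fact_le m i : (i <= m)%nat -> Binomial.C m i * INR (Factorial.fact i) <= INR m ^ i.
Proof.
  induction i as [|i IH]; intros Hi.
  - rewrite C_n_0. cbn. lra.
  - rewrite pascal_step3, fact_simpl, mult_INR, minus_INR by lia.
    specialize (IH ltac:(lia)).
    assert (0 < INR (S i)) by (apply lt_0_INR; lia).
    assert (INR i <= INR m) by (apply le_INR; lia).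
    assert (0 <= Binomial.C m i * INR (Factorial.fact i))
      by (apply Rmult_le_pos; [apply Rlt_le, C_gt0 | apply pos_INR]).
    apply Rle_trans with ((INR m - INR i) * (Binomial.C m i * INR (Factorial.fact i)));
      [right; field; lra|].
    cbn [pow]. apply Rle_trans with ((INR m - INR i) * INR m ^ i);
      [apply Rmult_le_compat_l; lra|].
    apply Rmult_le_compat_r; [apply pow_le, pos_INR | pose proof (pos_INR i); lra].
Qed.

Lemma binom_pmf_succ m q j : (j < m)%nat ->
  binom_pmf (S m) q (S j) = (1 - q) * binom_pmf m q (S j) + q * binom_pmf m q j.
Proof.
  intros H. unfold binom_pmf. rewrite <- (pascal m j H).
  replace (S m - S j)%nat with (S (m - S j)) by lia.
  replace (m - j)%nat with (S (m - S j)) by lia.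
  cbn [pow]. ring.
Qed.

Lemma binom_tail_S m s a : (a <= m)%nat ->
  binom_tail m s a = binom_pmf m s a + binom_tail m s (S a).
Proof.
  intros H. unfold binom_tail. replace (S m - a)%nat with (S (S m - S a)) by lia.
  reflexivity.
Qed.

Lemma binom_tail_gt m s a : (m < a)%nat -> binom_tail m s a = 0.
Proof. intros H. unfold binom_tail. replace (S m - a)%nat with 0%nat by lia. reflexivity. Qed.

Lemma binom_tail_last m s : binom_tail m s m = s ^ m.
Proof.
  rewrite binom_tail_S, binom_tail_gt by lia.
  unfold binom_pmf. rewrite C_n_n, Nat.sub_diag. cbn [pow]. ring.
Qed.

Lemma binom_tail_1 m a : (1 <= a <= m)%nat -> binom_tail m 1 a = 1.
Proof.
  intros [Ha Ham]. revert a Ham Ha.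
  apply (nat_down_ind (fun a => (1 <= a)%nat -> binom_tail m 1 a = 1)).
  - intros _. rewrite binom_tail_last. apply pow1.
  - intros a Ha IH Ha1. rewrite binom_tail_S, IH by lia.
    unfold binom_pmf. replace (m - a)%nat with (S (m - S a)) by lia. cbn [pow]. ring.
Qed.

Lemma binom_tail_complement m s j : (j < m)%nat ->
  binom_tail m s (S j) = 1 - sum_from (binom_pmf m s) 0 (S j).
Proof.
  intros H.
  assert (Htot : sum_from (binom_pmf m s) 0 (S j + (m - j)) = 1).
  { replace (S j + (m - j))%nat with (S m) by lia.
    rewrite <- sum_f_R0_sum_from. unfold binom_pmf.
    rewrite <- binomial, Rplus_minus. apply pow1. }
  rewrite sum_from_add in Htot.
  change (binom_tail m s (S j)) with (sum_from (binom_pmf m s) (S j) (S m - S j)).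
  replace (S m - S j)%nat with (m - j)%nat by lia. cbn [Nat.add] in Htot. lra.
Qed.

Lemma binom_tail_succ m q j : (j <= m)%nat ->
  binom_tail (S m) q (S j) = binom_tail m q (S j) + q * binom_pmf m q j.
Proof.
  revert j. apply nat_down_ind.
  - rewrite binom_tail_last, binom_tail_gt by lia.
    unfold binom_pmf. rewrite C_n_n, Nat.sub_diag. cbn [pow]. ring.
  - intros j Hj IH.
    rewrite binom_tail_S, IH, (binom_tail_S m q (S j)), binom_pmf_succ by lia. ring.
Qed.

Lemma is_derive_binom_pmf_succ m i x : (i < m)%nat ->
  is_derive (fun s => binom_pmf (S m) s (S i)) x
    (INR (S m) * (binom_pmf m x i - binom_pmf m x (S i))).
Proof.
  intros H. unfold binom_pmf.
  replace (S m - S i)%nat with (S (m - S i)) by lia.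
  replace (m - i)%nat with (S (m - S i)) by lia.
  set (e := (m - S i)%nat).
  assert (H1 := C_absorb m i ltac:(lia)).
  assert (H2 := C_absorb_sub m i H).
  replace (m - i)%nat with (S e) in H2 by (unfold e; lia).
  auto_derive; [exact I|].
  change (match i with 0%nat => 1 | S _ => INR i + 1 end) with (INR (S i)).
  change (match e with 0%nat => 1 | S _ => INR e + 1 end) with (INR (S e)).
  cbn [Nat.pred pow].
  transitivity (INR (S i) * Binomial.C (S m) (S i) * x ^ i * (1 - x) ^ S e
     - INR (S e) * Binomial.C (S m) (S i) * x ^ S i * (1 - x) ^ e).
  - cbn [pow]. unfold Rminus. ring.
  - rewrite H1, H2. cbn [pow]. ring.
Qed.

Lemma is_derive_binom_tail m j x : (j <= m)%nat ->
  is_derive (fun s => binom_tail (S m) s (S j)) x (INR (S m) * binom_pmf m x j).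
Proof.
  revert j. apply nat_down_ind.
  - apply is_derive_ext with (fun s => s ^ S m).
    { intros s. symmetry. apply binom_tail_last. }
    unfold binom_pmf. rewrite C_n_n, Nat.sub_diag.
    auto_derive; [exact I|].
    change (match m with 0%nat => 1 | S _ => INR m + 1 end) with (INR (S m)).
    cbn [pow Nat.pred]. ring.
  - intros j Hj IH.
    apply is_derive_ext with
      (fun s => binom_pmf (S m) s (S j) + binom_tail (S m) s (S (S j))).
    { intros s. symmetry. apply binom_tail_S. lia. }
    replace (INR (S m) * binom_pmf m x j) with
      (INR (S m) * (binom_pmf m x j - binom_pmf m x (S j))
       + INR (S m) * binom_pmf m x (S j)) by ring.
    apply (is_derive_plus (fun s => binom_pmf (S m) s (S j))); [|exact IH].
    apply is_derive_binom_pmf_succ. exact Hj.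
Qed.

(** * Monotonicity of the binomial tail along Bin(n, λ/n) *)

Lemma binom_pmf_ge_min n j q s p : 0 <= q -> q <= s <= p -> p <= 1 ->
  Rmin (binom_pmf n q j) (binom_pmf n p j) <= binom_pmf n s j.
Proof.
  intros Hq Hs Hp. pose proof (pow_beta_ge_min j (n - j) q s p Hq Hs Hp) as Hbeta.
  pose proof (C_gt0 n j) as HC.
  unfold binom_pmf. rewrite !Rmult_assoc.
  destruct (Rle_dec (q ^ j * (1 - q) ^ (n - j)) (p ^ j * (1 - p) ^ (n - j))) as [Hle|Hgt].
  - rewrite Rmin_left in Hbeta by exact Hle.
    apply Rle_trans with (Binomial.C n j * (q ^ j * (1 - q) ^ (n - j))); [apply Rmin_l|].
    apply Rmult_le_compat_l; lra.
  - rewrite Rmin_right in Hbeta by lra.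
    apply Rle_trans with (Binomial.C n j * (p ^ j * (1 - p) ^ (n - j))); [apply Rmin_r|].
    apply Rmult_le_compat_l; lra.
Qed.

Lemma binom_pmf_succ_le n j q : (j <= n)%nat -> 0 <= q <= 1 ->
  INR j <= INR (S n) * q -> binom_pmf (S n) q j <= binom_pmf n q j.
Proof.
  intros Hjn Hq Hmean. unfold binom_pmf.
  rewrite (pascal_step2 n j Hjn).
  replace (S n - j)%nat with (S (n - j)) by lia. cbn [pow].
  assert (Hw : INR (S (n - j)) = INR (S n) - INR j)
    by (replace (S (n - j)) with (S n - j)%nat by lia; apply minus_INR; lia).
  assert (0 < INR (S (n - j))) by (apply lt_0_INR; lia).
  assert (0 <= Binomial.C n j * q ^ j * (1 - q) ^ (n - j)).
  { apply Rmult_le_pos; [apply Rmult_le_pos|];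
      [apply Rlt_le, C_gt0 | apply pow_le | apply pow_le]; lra. }
  apply Rle_trans with
    (Binomial.C n j * q ^ j * (1 - q) ^ (n - j) * (INR (S n) * (1 - q) / INR (S (n - j))));
    [right; field; lra|].
  rewrite <- Rmult_1_r. apply Rmult_le_compat_l; [assumption|].
  apply Rmult_le_reg_r with (INR (S (n - j))); [assumption|].
  unfold Rdiv. rewrite Rmult_assoc, Rinv_l, Rmult_1_l, Rmult_1_r by lra. lra.
Qed.

(* After cancelling C(n, j) λ^j this is shift_pow_ratio_compound_le with
   u = n + 1 - λ. *)
Lemma binom_pmf_succ_scaled_le n j lam : (j <= n)%nat -> INR j <= lam <= INR j + 1 ->
  binom_pmf (S n) (lam / INR (S (S n))) j <= binom_pmf n (lam / INR (S n)) j.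
Proof.
  intros Hjn Hl.
  set (w := (n - j)%nat). set (M := INR (S n)). set (u := M - lam).
  assert (HM : M = INR j + INR w + 1)
    by (unfold M, w; replace (S n) with (S (j + (n - j))) by lia;
        rewrite S_INR, plus_INR; ring).
  assert (Hu : INR w <= u <= INR w + 1) by (unfold u; lra).
  assert (HM1 : 1 <= M) by (rewrite HM; pose proof (pos_INR j); pose proof (pos_INR w); lra).
  pose proof (shift_pow_ratio_compound_le (S n) w u ltac:(unfold w; lia) Hu) as Hkey.
  fold M in Hkey.
  assert (E1 : (M + 1) ^ S n = (M + 1) ^ j * (M + 1) ^ S w)
    by (rewrite <- pow_add; f_equal; unfold w; lia).
  assert (E2 : M ^ S n = M * (M ^ j * M ^ w))
    by (rewrite <- pow_add; replace (S n) with (S (j + w)) by (unfold w; lia); reflexivity).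
  rewrite E1, E2 in Hkey.
  unfold binom_pmf. rewrite (pascal_step2 n j Hjn).
  replace (S n - j)%nat with (S w) by (unfold w; lia). fold w.
  rewrite (S_INR (S n)). fold M.
  replace (1 - lam / (M + 1)) with ((u + 1) / (M + 1)) by (unfold u; field; lra).
  replace (1 - lam / M) with (u / M) by (unfold u; field; lra).
  unfold Rdiv. rewrite !Rpow_mult_distr, !pow_inv.
  assert (0 < INR (S w)) by (apply lt_0_INR; lia).
  assert (0 < M ^ j) by (apply pow_lt; lra).
  assert (0 < M ^ w) by (apply pow_lt; lra).
  assert (0 < (M + 1) ^ j) by (apply pow_lt; lra).
  assert (0 < (M + 1) ^ S w) by (apply pow_lt; lra).
  set (K := Binomial.C n j * lam ^ j).
  assert (0 <= K).
  { apply Rmult_le_pos; [apply Rlt_le, C_gt0 | apply pow_le; pose proof (pos_INR j); lra]. }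
  set (D := INR (S w) * ((M + 1) ^ j * (M + 1) ^ S w) * (M ^ j * M ^ w)).
  assert (0 < D) by (unfold D; apply Rmult_lt_0_compat; [apply Rmult_lt_0_compat|];
                     try apply Rmult_lt_0_compat; assumption).
  apply (Rmult_le_reg_r D); [assumption|].
  apply Rle_trans with (K * (M * (M ^ j * M ^ w) * (u + 1) ^ S w)).
  { right. unfold K, D. cbn [pow]. field. repeat split; try lra; apply pow_nonzero; lra. }
  apply Rle_trans with (K * (INR (S w) * ((M + 1) ^ j * (M + 1) ^ S w) * u ^ w)).
  { apply Rmult_le_compat_l; assumption. }
  right. unfold K, D. cbn [pow]. field. repeat split; try lra; apply pow_nonzero; lra.
Qed.

(* With p = λ/(n+1), q = λ/(n+2) and b = P(Bin(n+1, q) = j): Pascal's rule adds q b,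
   and the mean value theorem gives back (n+1) b (p - q) = q b. *)
Lemma binom_tail_scaled_succ_le n j lam : (j <= n)%nat -> 0 < lam ->
  INR j * (INR (S n) + 1) <= lam * INR (S n) -> lam <= INR j + 1 ->
  binom_tail (S (S n)) (lam / INR (S (S n))) (S j)
  <= binom_tail (S n) (lam / INR (S n)) (S j).
Proof.
  intros Hjn Hpos Hlow Hhigh.
  set (M := INR (S n)) in *.
  assert (HM : INR j + 1 <= M) by (unfold M; rewrite <- S_INR; apply le_INR; lia).
  rewrite (S_INR (S n)). fold M.
  set (p := lam / M). set (q := lam / (M + 1)).
  assert (Hq : 0 < q) by (unfold q; apply Rdiv_lt_0_compat; lra).
  assert (Hqp : q <= p) by (unfold p, q; apply Rmult_le_compat_l;
                             [lra | apply Rinv_le_contravar; lra]).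
  assert (Hp : p <= 1).
  { unfold p, Rdiv. rewrite <- (Rinv_r M) by lra.
    apply Rmult_le_compat_r; [left; apply Rinv_0_lt_compat|]; lra. }
  assert (Hmean : INR j <= M * q).
  { unfold q. apply Rmult_le_reg_r with (M + 1); [lra|].
    replace (M * (lam / (M + 1)) * (M + 1)) with (lam * M) by (field; lra). lra. }
  assert (Hlam : INR j <= lam <= INR j + 1).
  { split; [|exact Hhigh]. apply Rmult_le_reg_r with M; [lra | nra]. }
  set (b := binom_pmf (S n) q j).
  assert (Hb : forall x, q <= x <= p -> b <= binom_pmf n x j).
  { intros x Hx. apply Rle_trans with (Rmin (binom_pmf n q j) (binom_pmf n p j));
      [apply Rmin_glb | apply binom_pmf_ge_min; lra].
    - apply binom_pmf_succ_le; [exact Hjn | lra | exact Hmean].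
    - apply binom_pmf_succ_scaled_le; assumption. }
  assert (Hmvt : M * b * (p - q) <= binom_tail (S n) p (S j) - binom_tail (S n) q (S j)).
  { apply (MVT_lower_bound (fun s => binom_tail (S n) s (S j)) (fun x => M * binom_pmf n x j));
      [exact Hqp | |].
    - intros x _. apply is_derive_binom_tail. exact Hjn.
    - intros x Hx. apply Rmult_le_compat_l; [lra | apply Hb, Hx]. }
  rewrite binom_tail_succ by lia. fold b.
  replace (M * b * (p - q)) with (q * b) in Hmvt by (unfold p, q; field; lra).
  lra.
Qed.

Lemma binom_tail_scaled_antitone n j lam : (j < n)%nat -> 0 < lam ->
  INR j * (INR n + 1) <= lam * INR n -> lam <= INR j + 1 ->
  forall m, (n <= m)%nat ->
  binom_tail m (lam / INR m) (S j) <= binom_tail n (lam / INR n) (S j).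
Proof.
  intros Hjn Hpos Hlow Hhigh m Hnm. induction Hnm as [|m Hnm IH]; [apply Rle_refl|].
  eapply Rle_trans; [|exact IH].
  destruct m as [|m']; [lia|].
  apply binom_tail_scaled_succ_le; [lia | exact Hpos | | exact Hhigh].
  assert (INR n <= INR (S m')) by (apply le_INR; exact Hnm).
  assert (1 <= INR n) by (apply (le_INR 1); lia).
  assert (0 <= INR j) by apply pos_INR.
  assert (INR j * (INR n + 1) * INR (S m') <= lam * INR n * INR (S m'))
    by (apply Rmult_le_compat_r; lra).
  nra.
Qed.

(** * The Poisson limit *)

Definition exp_term (x : R) (i : nat) : R := x ^ i / INR (Factorial.fact i).

Lemma h_sum_from d c : h d c = 1 - exp (- c) * sum_from (exp_term c) 0 d.
Proof. reflexivity. Qed.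

Lemma exp_term_nonneg x i : 0 <= x -> 0 <= exp_term x i.
Proof.
  intros Hx. unfold exp_term.
  apply Rmult_le_pos; [apply pow_le, Hx | apply Rlt_le, Rinv_0_lt_compat, INR_fact_lt_0].
Qed.

Lemma binom_pmf_le_poisson m i j lam : (i <= j)%nat -> (j < m)%nat -> 0 < lam <= INR m ->
  2 * INR j * lam <= INR m ->
  binom_pmf m (lam / INR m) i
  <= exp (- lam) * exp_term lam i * (1 + 2 * INR j * lam / INR m).
Proof.
  intros Hij Hjm Hlam Hm2.
  set (M := INR m) in *. set (y := lam / M).
  assert (Hy : 0 <= y <= 1).
  { unfold y. split; [apply Rmult_le_pos; [lra | apply Rlt_le, Rinv_0_lt_compat; lra]|].
    unfold Rdiv. rewrite <- (Rinv_r M) by lra.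
    apply Rmult_le_compat_r; [apply Rlt_le, Rinv_0_lt_compat|]; lra. }
  assert (Hij' : INR i <= INR j) by (apply le_INR; exact Hij).
  assert (Hpow : Binomial.C m i * y ^ i <= exp_term lam i).
  { pose proof (C_mul_fact_le m i ltac:(lia)) as HC. fold M in HC.
    pose proof (INR_fact_lt_0 i). assert (0 < M ^ i) by (apply pow_lt; lra).
    unfold y, exp_term, Rdiv. rewrite Rpow_mult_distr, pow_inv.
    apply Rmult_le_reg_r with (INR (Factorial.fact i) * M ^ i);
      [apply Rmult_lt_0_compat; lra|].
    apply Rle_trans with (Binomial.C m i * INR (Factorial.fact i) * lam ^ i);
      [right; field; lra|].
    apply Rle_trans with (M ^ i * lam ^ i); [|right; field; lra].
    apply Rmult_le_compat_r; [apply pow_le; lra | exact HC]. }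
  set (z := y * INR i).
  assert (Hz : 0 <= z <= INR j * lam / M).
  { unfold z. split; [apply Rmult_le_pos; [lra | apply pos_INR]|].
    apply Rle_trans with (INR j * y); [|unfold y; right; field; lra].
    rewrite (Rmult_comm (INR j)). apply Rmult_le_compat_l; lra. }
  assert (Hz2 : INR j * lam / M <= 1 / 2).
  { apply Rmult_le_reg_r with (2 * M); [lra|].
    apply Rle_trans with (2 * INR j * lam); [right; field; lra | lra]. }
  assert (Hexp : (1 - y) ^ (m - i) <= exp (- lam) * (1 + 2 * INR j * lam / M)).
  { eapply Rle_trans; [apply one_sub_pow_le_exp; lra|].
    rewrite minus_INR by lia. fold M.
    replace (- (y * (M - INR i))) with (- lam + z) by (unfold z, y; field; lra).
    rewrite exp_plus. apply Rmult_le_compat_l; [apply Rlt_le, exp_pos|].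
    eapply Rle_trans; [apply exp_le_one_add_twice; lra|].
    replace (2 * INR j * lam / M) with (2 * (INR j * lam / M)) by (field; lra). lra. }
  unfold binom_pmf. fold M. fold y.
  apply Rle_trans with (exp_term lam i * (exp (- lam) * (1 + 2 * INR j * lam / M)));
    [|right; ring].
  apply Rmult_le_compat; [| apply pow_le; lra | exact Hpow | exact Hexp].
  apply Rmult_le_pos; [apply Rlt_le, C_gt0 | apply pow_le; lra].
Qed.

Lemma h_le_binom_tail_small n j lam : (j < n)%nat -> 0 < lam ->
  INR j * (INR n + 1) <= lam * INR n -> lam <= INR j + 1 ->
  h (S j) lam <= binom_tail n (lam / INR n) (S j).
Proof.
  intros Hjn Hpos Hlow Hhigh.
  set (P := sum_from (exp_term lam) 0 (S j)).
  assert (Hjn' : INR j + 1 <= INR n) by (rewrite <- S_INR; apply le_INR; lia).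
  apply (le_of_eventually_ge_sub_div _ _ (2 * INR j * lam * exp (- lam) * P)
           (2 * INR j * lam) n).
  intros m Hnm Hm.
  assert (HmR : INR n <= INR m) by (apply le_INR; exact Hnm).
  eapply Rle_trans; [|exact (binom_tail_scaled_antitone n j lam Hjn Hpos Hlow Hhigh m Hnm)].
  rewrite binom_tail_complement, h_sum_from by lia. fold P.
  assert (Hsum : sum_from (binom_pmf m (lam / INR m)) 0 (S j)
                 <= exp (- lam) * (1 + 2 * INR j * lam / INR m) * P).
  { unfold P. rewrite <- sum_from_scal. apply sum_from_le. intros i Hi.
    eapply Rle_trans; [apply (binom_pmf_le_poisson m i j); [lia | lia | lra | lra]|].
    right. ring. }
  replace (2 * INR j * lam * exp (- lam) * P / INR m)
    with (exp (- lam) * (2 * INR j * lam / INR m) * P) by (field; lra).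
  lra.
Qed.

(** * The case λ > j + 1 *)

Lemma is_derive_exp_term j x : is_derive (fun t => exp_term t (S j)) x (exp_term x j).
Proof.
  unfold exp_term. auto_derive; [exact I|].
  change (match j with 0%nat => 1 | S _ => INR j + 1 end) with (INR (S j)).
  change (Factorial.fact j + j * Factorial.fact j)%nat with (Factorial.fact (S j)).
  rewrite fact_simpl, mult_INR.
  field. split; [apply INR_fact_neq_0 | apply not_0_INR; lia].
Qed.

Lemma is_derive_sum_exp_term j x :
  is_derive (fun t => sum_from (exp_term t) 0 (S j)) x (sum_from (exp_term x) 0 j).
Proof.
  induction j as [|j IH].
  - apply is_derive_ext with (fun _ => 1).
    { intros t. unfold exp_term. cbn. field. }
    auto_derive; reflexivity.
  - apply is_derive_ext with
      (fun t => sum_from (exp_term t) 0 (S j) + exp_term t (S j)).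
    { intros t. rewrite <- (Nat.add_1_r (S j)), sum_from_add. cbn. ring. }
    replace (sum_from (exp_term x) 0 (S j))
      with (sum_from (exp_term x) 0 j + exp_term x j)
      by (rewrite <- (Nat.add_1_r j), sum_from_add; cbn; ring).
    apply (is_derive_plus (fun t => sum_from (exp_term t) 0 (S j))); [exact IH|].
    apply is_derive_exp_term.
Qed.

Lemma is_derive_h j x : is_derive (h (S j)) x (exp (- x) * exp_term x j).
Proof.
  apply is_derive_ext with (fun t => 1 - exp (- t) * sum_from (exp_term t) 0 (S j)).
  { intros t. symmetry. apply h_sum_from. }
  replace (exp (- x) * exp_term x j) with
    (0 - (- exp (- x) * sum_from (exp_term x) 0 (S j)
          + exp (- x) * sum_from (exp_term x) 0 j))
    by (rewrite <- (Nat.add_1_r j), sum_from_add; cbn; ring).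
  apply (is_derive_minus (fun _ => 1)); [auto_derive; [exact I | reflexivity]|].
  apply (is_derive_mult (fun t => exp (- t)) (fun t => sum_from (exp_term t) 0 (S j))).
  - auto_derive; [exact I | ring].
  - apply is_derive_sum_exp_term.
  - intros; apply Rmult_comm.
Qed.

Lemma h_le_1 d c : 0 <= c -> h d c <= 1.
Proof.
  intros Hc. rewrite h_sum_from.
  assert (0 <= sum_from (exp_term c) 0 d)
    by (apply sum_from_nonneg; intros; apply exp_term_nonneg, Hc).
  pose proof (exp_pos (- c)). nra.
Qed.

Lemma is_derive_binom_tail_scaled m j x : (j <= m)%nat ->
  is_derive (fun t => binom_tail (S m) (t / INR (S m)) (S j)) x
    (binom_pmf m (x / INR (S m)) j).
Proof.
  intros Hjm.
  assert (HN : 0 < INR (S m)) by (apply lt_0_INR; lia).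
  replace (binom_pmf m (x / INR (S m)) j)
    with (/ INR (S m) * (INR (S m) * binom_pmf m (x / INR (S m)) j)) by (field; lra).
  apply (is_derive_comp (fun s => binom_tail (S m) s (S j)) (fun t => t / INR (S m))).
  - apply is_derive_binom_tail, Hjm.
  - auto_derive; [exact I|].
    change (match m with 0%nat => 1 | S _ => INR m + 1 end) with (INR (S m)). ring.
Qed.

Lemma one_sub_div_pow_mul_exp_antitone N e s t : 0 < N ->
  N - INR e <= s -> s <= t -> t <= N ->
  (1 - t / N) ^ e * exp t <= (1 - s / N) ^ e * exp s.
Proof.
  intros HN Hs Hst Ht. destruct e as [|e'].
  { change (INR 0) with 0 in Hs. replace t with s by lra. apply Rle_refl. }
  apply (nonincreasing_of_deriv_nonpos (fun x => (1 - x / N) ^ S e' * exp x)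
           (fun x => (1 - x / N) ^ e' * exp x * ((N - INR (S e') - x) / N)));
    [exact Hst | |].
  - intros x _. auto_derive; [exact I|].
    change (match e' with 0%nat => 1 | S _ => INR e' + 1 end) with (INR (S e')).
    cbn [pow Nat.pred]. unfold Rminus, Rdiv. field. lra.
  - intros x Hx.
    assert (0 <= 1 - x / N).
    { apply Rmult_le_reg_r with N; [exact HN|].
      replace ((1 - x / N) * N) with (N - x) by (field; lra). lra. }
    apply Rmult_le_0_l.
    + apply Rmult_le_pos; [apply pow_le; lra | apply Rlt_le, exp_pos].
    + apply Rmult_le_0_r; [lra | apply Rlt_le, Rinv_0_lt_compat, HN].
Qed.

Lemma is_derive_binom_tail_sub_h m j x : (j <= m)%nat ->
  is_derive (fun t => binom_tail (S m) (t / INR (S m)) (S j) - h (S j) t) x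
    ((x / INR (S m)) ^ j * exp (- x) *
     (Binomial.C m j * (1 - x / INR (S m)) ^ (m - j) * exp x
      - INR (S m) ^ j / INR (Factorial.fact j))).
Proof.
  intros Hjm.
  assert (HN : 0 < INR (S m)) by (apply lt_0_INR; lia).
  replace ((x / INR (S m)) ^ j * exp (- x) * _)
    with (binom_pmf m (x / INR (S m)) j - exp (- x) * exp_term x j).
  - apply (is_derive_minus (fun t => binom_tail (S m) (t / INR (S m)) (S j)) (h (S j))).
    + apply is_derive_binom_tail_scaled, Hjm.
    + apply is_derive_h.
  - unfold binom_pmf, exp_term, Rdiv.
    rewrite Rpow_mult_distr, pow_inv, exp_Ropp.
    pose proof (exp_pos x). pose proof (INR_fact_lt_0 j).
    assert (0 < INR (S m) ^ j) by (apply pow_lt, HN).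
    field. lra.
Qed.

Lemma h_le_binom_tail_large m j lam : (j <= m)%nat -> INR j + 1 <= lam <= INR (S m) ->
  h (S j) lam <= binom_tail (S m) (lam / INR (S m)) (S j).
Proof.
  intros Hjm Hlam.
  set (N := INR (S m)) in *.
  assert (Hj0 : 0 <= INR j) by apply pos_INR.
  assert (HN : N - INR (m - j) = INR j + 1)
    by (unfold N; rewrite minus_INR, S_INR by exact Hjm; ring).
  set (G := fun x => binom_tail (S m) (x / N) (S j) - h (S j) x).
  assert (Hleft : 0 <= G (INR j + 1)).
  { unfold G. rewrite <- S_INR.
    pose proof (h_le_binom_tail_small (S m) j (INR (S j))) as Hsmall.
    rewrite S_INR in Hsmall |- *. fold N in Hsmall.
    enough (h (S j) (INR j + 1) <= binom_tail (S m) ((INR j + 1) / N) (S j)) by lra.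
    apply Hsmall; [lia | lra | lra | lra]. }
  assert (Hright : 0 <= G N).
  { unfold G. replace (N / N) with 1 by (field; lra).
    rewrite binom_tail_1 by lia. pose proof (h_le_1 (S j) N ltac:(lra)). lra. }
  pose proof (ge_min_of_deriv_sign_change G (fun x => (x / N) ^ j * exp (- x))
    (fun x => Binomial.C m j * (1 - x / N) ^ (m - j) * exp x - N ^ j / INR (Factorial.fact j))
    (INR j + 1) N lam Hlam) as Hmin.
  assert (0 <= Rmin (G (INR j + 1)) (G N)) by (apply Rmin_glb; assumption).
  enough (Rmin (G (INR j + 1)) (G N) <= G lam) by (unfold G in *; lra).
  apply Hmin.
  - intros x _. apply is_derive_binom_tail_sub_h, Hjm.
  - intros x Hx. apply Rmult_le_pos; [|apply Rlt_le, exp_pos].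
    apply pow_le, Rmult_le_pos; [lra | apply Rlt_le, Rinv_0_lt_compat; lra].
  - intros s t Hs Hst Ht. apply Rplus_le_compat_r.
    rewrite !Rmult_assoc. apply Rmult_le_compat_l; [apply Rlt_le, C_gt0|].
    apply one_sub_div_pow_mul_exp_antitone; lra.
Qed.

Lemma h_le_binom_tail n j lam : (j < n)%nat -> 0 < lam <= INR n ->
  INR j * (INR n + 1) <= lam * INR n ->
  h (S j) lam <= binom_tail n (lam / INR n) (S j).
Proof.
  intros Hjn Hlam Hlow.
  destruct (Rle_lt_dec lam (INR j + 1)) as [Hsmall|Hlarge].
  - apply h_le_binom_tail_small; [exact Hjn | lra | exact Hlow | exact Hsmall].
  - destruct n as [|m]; [lia|]. apply h_le_binom_tail_large; [lia | lra].
Qed.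

Theorem corollary1 (k d : nat) (c : R) :
  (1 <= k)%nat -> (1 <= d)%nat ->
  0 < c -> c <= INR k ->
  INR d <= c * (1 - 1 / (INR k + 1)) + 1 ->
  binom_tail k (c / INR k) d >= h d c.
Proof.
  intros Hk Hd Hc HcK Hdc.
  destruct d as [|j]; [lia|]. rewrite S_INR in Hdc.
  assert (Hlow : INR j * (INR k + 1) <= c * INR k).
  { replace (c * (1 - 1 / (INR k + 1))) with (c * INR k / (INR k + 1)) in Hdc by (field; lra).
    apply Rmult_le_reg_r with (/ (INR k + 1)); [apply Rinv_0_lt_compat; lra|].
    rewrite Rmult_assoc, Rinv_r, Rmult_1_r by lra. lra. }
  assert (Hjk : (j < k)%nat).
  { apply INR_lt. apply Rmult_lt_reg_r with (INR k + 1); [lra | nra]. }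
  apply Rle_ge, h_le_binom_tail; [exact Hjk | lra | exact Hlow].
Qed.
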